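(* Let $U$ be a finite nonempty set, $R$ an equivalence relation on $U$, and $M(R)$ the support matroid induced by $R$. For every $X\subseteq U$, $X$ is a closed set of $M(R)$ if and only if $R^{*}(X)=X$.
   Context: For $x\in U$, $RN(x)=\{y\in U\mid xRy\}$; $R^{*}(X)=\{x\in U\mid RN(x)\cap X\neq\emptyset\}$. Let $\mathbf{S}(R)=\{X\subseteq U\mid R^{*}(X)=U\}$. The support matroid $M(R)=(U,\mathbf{I}(R))$ is the matroid on $U$ whose independent sets $\mathbf{I}(R)$ are the subsets of inclusion-minimal members of $\mathbf{S}(R)$. For a matroid $(U,\mathbf{I})$, the rank is $r(X)=\max\{|I|\mid I\subseteq X, I\in\mathbf{I}\}$, the closure is $cl(X)=\{e\in U\mid r(X)=r(X\cup\{e\})\}$, and $X$ is closed if $cl(X)=X$. *)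

From mathcomp Require Import all_boot.
Set Implicit Arguments. Unset Strict Implicit. Unset Printing Implicit Defensive.

Section SupportMatroid.
Variables (U : finType) (R : rel U).

Definition RN (x : U) : {set U} := [set y | R x y].

Definition Rupper (X : {set U}) : {set U} := [set x | RN x :&: X != set0].

Definition in_S (X : {set U}) : bool := Rupper X == [set: U].

Definition indep (I : {set U}) : bool :=
  [exists X : {set U}, minset in_S X && (I \subset X)].

Definition mrank (X : {set U}) : nat :=
  \max_(I : {set U} | (I \subset X) && indep I) #|I|.

Definition mclosure (X : {set U}) : {set U} :=
  [set e | mrank X == mrank (e |: X)].

Definition mclosed (X : {set U}) : bool := mclosure X == X.

End SupportMatroid.

(* Minimal members of S(R) are partial transversals of the classes of R
   (sets meeting each class at most once), and maximal partial transversals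
   are minimal members of S(R); so the independent sets are exactly the
   partial transversals.  Adding an element e to X
   then raises the rank iff the class of e misses X: otherwise e can be
   exchanged against the element of its class in a maximum independent
   subset of X.  Hence cl(X) = R^*(X). *)
From mathcomp Require Import all_boot.
Set Implicit Arguments. Unset Strict Implicit. Unset Printing Implicit Defensive.

Section SupportMatroidOfEquivalence.
Variables (U : finType) (R : rel U).

Lemma RupperP (X : {set U}) x :
  reflect (exists2 y, y \in X & R x y) (x \in Rupper R X).
Proof.
rewrite inE; apply: (iffP (set0Pn _)) => [[y]|[y yX Rxy]].
  by rewrite !inE => /andP[Rxy yX]; exists y.
by exists y; rewrite !inE Rxy.
Qed.

Definition partial_transversal (I : {set U}) : bool :=
  [forall x in I, forall y in I, R x y ==> (x == y)].

Lemma partial_transversalP (I : {set U}) :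
  reflect {in I &, forall x y, R x y -> x = y} (partial_transversal I).
Proof.
apply: (iffP forall_inP) => [ptI x y xI yI Rxy | ptI x xI].
  by apply/eqP; move/forall_inP/(_ y yI)/implyP: (ptI x xI); apply.
by apply/forall_inP => y yI; apply/implyP => /(ptI x y xI yI)->.
Qed.

Lemma partial_transversalS (I J : {set U}) :
  I \subset J -> partial_transversal J -> partial_transversal I.
Proof.
move=> /subsetP IJ /partial_transversalP ptJ.
by apply/partial_transversalP => x y /IJ xJ /IJ yJ; apply: ptJ.
Qed.

Lemma partial_transversal0 : partial_transversal set0.
Proof. by apply/partial_transversalP => x y; rewrite inE. Qed.

Hypotheses (Rrefl : reflexive R) (Rsym : symmetric R) (Rtrans : transitive R).

Lemma sub_Rupper (X : {set U}) : X \subset Rupper R X.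
Proof. by apply/subsetP => x xX; apply/RupperP; exists x. Qed.

Lemma partial_transversalU1 (I : {set U}) e :
  e \notin Rupper R I -> partial_transversal I ->
  partial_transversal (e |: I).
Proof.
move=> eI /partial_transversalP ptI; apply/partial_transversalP.
move=> a b /setU1P[->|aI] /setU1P[->|bI] // Rab.
- by case/RupperP: eI; exists b.
- by case/RupperP: eI; exists a; rewrite // Rsym.
- exact: ptI.
Qed.

Section Exchange.
Variables (I : {set U}) (e x : U).
Hypotheses (ptI : partial_transversal I) (eI : e \in I) (Rex : R e x).

Lemma notin_exchange : x \notin I :\ e.
Proof.
apply/setD1P => -[xe xI]; case/eqP: xe.
by apply/esym/(partial_transversalP _ ptI).
Qed.

Lemma card_exchange : #|x |: (I :\ e)| = #|I|.
Proof. by rewrite cardsU1 notin_exchange (cardsD1 e I) eI. Qed.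

Lemma partial_transversal_exchange : partial_transversal (x |: (I :\ e)).
Proof.
have /partial_transversalP ptI' := ptI.
have Rxe : R x e by rewrite Rsym.
apply/partial_transversalP => a b.
move=> /setU1P[->|/setD1P[ae aI]] /setU1P[->|/setD1P[be bI]] // Rab.
- by case/eqP: be; apply/esym/ptI' => //; apply: Rtrans Rex Rab.
- by case/eqP: ae; apply: ptI' => //; apply: Rtrans Rab Rxe.
- exact: ptI'.
Qed.

End Exchange.

Lemma minset_in_S_partial_transversal (X : {set U}) :
  minset (in_S R) X -> partial_transversal X.
Proof.
move/minsetP=> [/eqP SX minX]; apply/partial_transversalP => x y xX yX Rxy.
apply/eqP; apply: contraT => xy.
have SXy : in_S R (X :\ y).
  apply/eqP/setP => z; rewrite in_setT; apply/RupperP.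
  have /RupperP[w wX Rzw] : z \in Rupper R X by rewrite SX inE.
  have [wy|wy] := eqVneq w y; last by exists w; rewrite // !inE wy.
  exists x; first by rewrite !inE xy.
  by apply: Rtrans Rzw _; rewrite wy Rsym.
by move: (minX _ SXy (subD1set X y)) => /setP/(_ y); rewrite !inE eqxx yX.
Qed.

Lemma maxset_partial_transversal_in_S (J : {set U}) :
  maxset partial_transversal J -> minset (in_S R) J.
Proof.
move/maxsetP=> [ptJ maxJ]; apply/minsetP; split.
  apply/eqP/setP => z; rewrite in_setT; apply/idPn => zJ.
  have := maxJ _ (partial_transversalU1 zJ ptJ) (subsetUr _ _).
  move/setP/(_ z); rewrite setU11 => /esym/(subsetP (sub_Rupper J)).
  exact/negP.
move=> Y /eqP SY YJ; apply/eqP; rewrite eqEsubset YJ /=.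
apply/subsetP => z zJ; have /RupperP[w wY Rzw] : z \in Rupper R Y.
  by rewrite SY inE.
by rewrite ((partial_transversalP _ ptJ) z w zJ (subsetP YJ w wY) Rzw).
Qed.

Lemma indep_partial_transversal (I : {set U}) :
  indep R I = partial_transversal I.
Proof.
apply/existsP/idP => [[X /andP[/minset_in_S_partial_transversal ptX IX]]|ptI].
  exact: partial_transversalS ptX.
have [J maxJ IJ] := maxset_exists ptI.
by exists J; rewrite IJ maxset_partial_transversal_in_S.
Qed.

Lemma leq_mrank (X I : {set U}) :
  I \subset X -> partial_transversal I -> #|I| <= mrank R X.
Proof.
by move=> IX ptI; apply: leq_bigmax_cond; rewrite IX indep_partial_transversal.
Qed.

Lemma mrank_leqP (X : {set U}) (m : nat) :
  reflect
    (forall I : {set U}, I \subset X -> partial_transversal I -> #|I| <= m)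
    (mrank R X <= m).
Proof.
pose P := [pred I : {set U} | (I \subset X) && indep R I].
apply: (iffP (bigmax_leqP P m _)) => H I.
  by move=> IX ptI; apply: H; rewrite /= IX indep_partial_transversal.
by move=> /andP[IX]; rewrite indep_partial_transversal; apply: H.
Qed.

Lemma mrank_witness (X : {set U}) :
  exists2 I : {set U},
    (I \subset X) && partial_transversal I & mrank R X = #|I|.
Proof.
pose P := [pred I : {set U} | (I \subset X) && indep R I].
have [|I] := @eq_bigmax_cond _ P (fun I => #|I|).
  by apply/card_gt0P; exists set0; rewrite inE sub0set indep_partial_transversal
     partial_transversal0.
by rewrite inE indep_partial_transversal => IX_ptI rk; exists I.
Qed.

Lemma mrankU1_Rupper (X : {set U}) e :
  e \in Rupper R X -> mrank R (e |: X) = mrank R X.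
Proof.
case/RupperP=> x xX Rex; apply/eqP; rewrite eqn_leq.
apply/andP; split; last first.
  apply/mrank_leqP => I IX; apply: leq_mrank.
  exact: subset_trans IX (subsetUr _ _).
apply/mrank_leqP => I IeX ptI.
have [eI|eI] := boolP (e \in I); last first.
  apply: leq_mrank ptI; apply/subsetP => z zI.
  by case/setU1P: (subsetP IeX z zI) => // ze; rewrite -ze zI in eI.
rewrite -(card_exchange ptI eI Rex); apply: leq_mrank.
  apply/subsetP => z /setU1P[->//|/setD1P[ze zI]].
  by case/setU1P: (subsetP IeX z zI) => // ze'; rewrite ze' eqxx in ze.
exact: partial_transversal_exchange.
Qed.

Lemma mrankU1_notin_Rupper (X : {set U}) e :
  e \notin Rupper R X -> mrank R X < mrank R (e |: X).
Proof.
move=> eX; have [I /andP[IX ptI] ->] := mrank_witness X.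
have eI : e \notin Rupper R I.
  apply: contra eX => /RupperP[y yI Rey].
  by apply/RupperP; exists y; rewrite ?(subsetP IX).
have enI : e \notin I by apply: contra eI; apply: (subsetP (sub_Rupper I)).
have <- : #|e |: I| = #|I|.+1 by rewrite cardsU1 enI.
by apply: leq_mrank (setUS [set e] IX) (partial_transversalU1 eI ptI).
Qed.

Lemma mclosure_Rupper (X : {set U}) : mclosure R X = Rupper R X.
Proof.
apply/setP => e; rewrite inE.
have [eX|eX] := boolP (e \in Rupper R X).
  by rewrite mrankU1_Rupper // eqxx.
by rewrite ltn_eqF ?mrankU1_notin_Rupper // (negPf eX).
Qed.

End SupportMatroidOfEquivalence.

Theorem corollary1 (U : finType) (R : rel U)
  (HU : 0 < #|U|)
  (Hrefl : reflexive R) (Hsym : symmetric R) (Htrans : transitive R) :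
  forall X : {set U}, mclosed R X <-> Rupper R X = X.
Proof.
move=> X; rewrite /mclosed mclosure_Rupper //.
by split=> [/eqP|->].
Qed.
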